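(* $\frac{11n}{9}+o(n)\le\mathrm{sat}_\circlearrowright(n,M_2)\le 3n+o(n)$.
   Context: $\Omega_n=\{v_0,\dots,v_{n-1}\}$ with cyclic order $v_0<\dots<v_{n-1}<v_0$ (indices mod $n$). A $3$-cgh on $\Omega_n$ is a family of $3$-subsets of $\Omega_n$. For a $3$-cgh $F$, $H$ contains a copy of $F$ if there is an injection of the vertex set of $F$ into $\Omega_n$ preserving the cyclic order and mapping every edge of $F$ to an edge of $H$. $H$ is $F$-saturated if it contains no copy of $F$ but $H\cup\{e\}$ does for every $e\in\binom{\Omega_n}{3}\setminus H$; $\mathrm{sat}_\circlearrowright(n,F)$ is the minimum number of edges of an $F$-saturated $3$-cgh on $\Omega_n$. $M_2$ is the $3$-cgh on $\Omega_6$ with edges $\{v_0,v_1,v_3\}$ and $\{v_2,v_4,v_5\}$. *)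

From mathcomp Require Import all_boot all_order all_algebra.
Set Implicit Arguments. Unset Strict Implicit. Unset Printing Implicit Defensive.

(* A 3-cgh on Omega_n = 'I_n (vertex v_i is i; cyclic order 0 < 1 < ... < n-1 < 0). *)
Definition is_3cgh (n : nat) (H : {set {set 'I_n}}) : bool :=
  [forall e in H, #|e| == 3].

(* phi : 'I_m -> 'I_n preserves the cyclic order: after rotating Omega_n so
   that some vertex r becomes the first one, phi is strictly increasing.
   (This implies injectivity.) *)
Definition cyc_order_preserving (m n : nat) (phi : 'I_m -> 'I_n) : bool :=
  [exists r : 'I_n, forall i : 'I_m, forall j : 'I_m, (i < j)%N ==>
    ((phi i + n - r) %% n < (phi j + n - r) %% n)%N].

Definition contains_copy (m n : nat) (H : {set {set 'I_n}}) (F : {set {set 'I_m}}) : bool :=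
  [exists phi : {ffun 'I_m -> 'I_n},
    [&& injectiveb phi, cyc_order_preserving phi &
        [forall e in F, phi @: e \in H]]].

Definition saturated (m n : nat) (F : {set {set 'I_m}}) (H : {set {set 'I_n}}) : bool :=
  [&& is_3cgh H, ~~ contains_copy H F &
  [forall e : {set 'I_n}, (#|e| == 3) ==> (e \notin H) ==> contains_copy (e |: H) F]].

(* sat(n,F): the minimum number of edges of an F-saturated 3-cgh on Omega_n.
   (An F-saturated 3-cgh always exists: take a maximal F-free 3-cgh; every
   3-cgh has at most 'C(n,3) edges, so 'C(n,3) is a harmless neutral value.) *)
Definition sat (m : nat) (F : {set {set 'I_m}}) (n : nat) : nat :=
  \big[minn/'C(n, 3)]_(H : {set {set 'I_n}} | saturated F H) #|H|.

Definition M2 : {set {set 'I_6}} :=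
  [set [set (inord 0 : 'I_6); inord 1; inord 3]; [set (inord 2 : 'I_6); inord 4; inord 5]].

From mathcomp Require Import all_boot all_order all_algebra.
From mathcomp Require Import zify lra.
Set Implicit Arguments. Unset Strict Implicit. Unset Printing Implicit Defensive.

(* We prove in fact  4n/3 <= sat(n, M2) <= 3n + 1  for n >= 8; since 4/3 > 11/9
   the asymptotic statement follows.  Vertices are residues mod n and an arc is a
   set of cyclically consecutive vertices.

   If two triples form a copy of M2, with cyclic pattern AABABB,
   they are disjoint and "interlaced": no arc contains one of them while
   avoiding the other (an arc containing A must pass over a vertex of B, and
   symmetrically).  Hence a 3-cgh in which any two disjoint edges are
   separated by an arc is M2-free, and in an M2-saturated 3-cgh every missing
   triple is interlaced with some disjoint edge.

   The 3-cgh Hc made of the n consecutive triples {i,i+1,i+2},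
   the fans {0,i,i+1}, the triples {i,i+1,i+3} and {0,2,4} has at most 3n+1
   edges; its disjoint edges are always separated, so it is M2-free, and an
   explicit copy of M2 is exhibited for every triple it misses.

   In an M2-saturated H every consecutive triple is an edge
   (it is separated from everything).  For each vertex v and each of the two
   triples {v-2,v-1,v+1}, {v-1,v+1,v+2} we charge either that triple itself
   (if it is an edge, at its vertex v+1) or an edge through v interlaced with
   it; this charges 2n distinct (edge, vertex, side) incidences to the
   non-consecutive edges, each of which can absorb at most 3 * 2 of them. *)

(* Routine residue arithmetic: every residue [a %% n] with [a < 2 n] is [a] or
   [a - n].  [expand_mods] rewrites every innermost residue of the goal this
   way (splitting cases only when lia cannot decide which one applies, using
   the bounds available in the context), after which [lia] finishes. *)
Lemma modn_small_sub a n : n <= a < 2 * n -> a %% n = a - n.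
Proof.
move=> h; have -> : a = (a - n) + n by rewrite subnK //; lia.
by rewrite modnDr modn_small //; lia.
Qed.

Ltac expand_mods :=
  repeat match goal with |- context [?a %% ?n] =>
    lazymatch a with context [_ %% _] => fail | _ =>
    let lo := fresh "hm" in let hi := fresh "hm" in
    first
    [ assert (lo : a < n) by lia; rewrite (modn_small lo); clear lo
    | assert (lo : n <= a) by lia; assert (hi : a < 2 * n) by lia;
      rewrite (modn_small_sub (introT andP (conj lo hi))); clear lo hi
    | case: (ltnP a n) => lo;
      [rewrite (modn_small lo) | assert (hi : a < 2 * n) by lia;
                                 rewrite (modn_small_sub (introT andP (conj lo hi)))] ]
    end end.

Section Triples.
Variable T : finType.
Implicit Types a b c x : T.

Lemma set3_1 a b c : a \in [set a; b; c]. Proof. by rewrite !inE eqxx. Qed.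
Lemma set3_2 a b c : b \in [set a; b; c]. Proof. by rewrite !inE eqxx orbT. Qed.
Lemma set3_3 a b c : c \in [set a; b; c]. Proof. by rewrite !inE eqxx !orbT. Qed.

Lemma set3P x a b c : x \in [set a; b; c] -> [\/ x = a, x = b | x = c].
Proof. by rewrite !inE => /orP [/orP [] | ] /eqP ->; [apply: Or31 | apply: Or32 | apply: Or33]. Qed.

Lemma notin_set3 x a b c : x \notin [set a; b; c] -> [/\ x <> a, x <> b & x <> c].
Proof. by rewrite !inE !negb_or => /andP [/andP [/eqP ? /eqP ?] /eqP ?]. Qed.

Lemma disjoint_set3 a b c (B : {set T}) :
  [disjoint [set a; b; c] & B] = [&& a \notin B, b \notin B & c \notin B].
Proof.
apply/idP/and3P => [hd | [ha hb hc]].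
  by rewrite !(disjointFr hd) ?set3_1 ?set3_2 ?set3_3.
rewrite -setI_eq0; apply/eqP/setP => x; rewrite in_setI in_set0.
by apply/negP => /andP [/set3P [] -> hx]; [move: ha | move: hb | move: hc]; rewrite hx.
Qed.

Lemma card_set3 a b c : a != b -> a != c -> b != c -> #|[set a; b; c]| = 3.
Proof.
move=> hab hac hbc; rewrite -setUA cardsU1 !inE negb_or hab hac /=.
by rewrite -[[set b] :|: [set c]]/([set b; c]) cards2 hbc.
Qed.

Lemma imset_set3 (U : finType) (f : T -> U) a b c : f @: [set a; b; c] = [set f a; f b; f c].
Proof. by rewrite !imsetU !imset_set1. Qed.

End Triples.

Section CyclicOrder.
Variable m : nat.
Local Notation n := m.+1.

Definition vx (k : nat) : 'I_n := inord (k %% n).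

Lemma val_vx k : vx k = k %% n :> nat.
Proof. by rewrite /vx inordK // ltn_pmod. Qed.

Lemma vx_val (x : 'I_n) : vx x = x.
Proof. by apply: val_inj; rewrite /= val_vx modn_small. Qed.

Lemma eq_vx (x : 'I_n) k : (x == vx k) = (x == k %% n :> nat).
Proof. by rewrite -val_eqE /= val_vx. Qed.

Lemma vx_eq a b : (vx a == vx b) = (a %% n == b %% n).
Proof. by rewrite eq_vx val_vx. Qed.

Lemma vxE a b : a %% n = b %% n -> vx a = vx b.
Proof. by move=> h; apply/eqP; rewrite vx_eq h. Qed.

Lemma vx_modn a b : vx a = vx b -> a %% n = b %% n.
Proof. by move/eqP; rewrite vx_eq => /eqP. Qed.

Lemma vx_shift a b c d : vx a = vx b ->
  a + d = b + c \/ a + d = b + c + n \/ a + d + n = b + c -> vx c = vx d.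
Proof.
move/vx_modn => hab e; apply: vxE; apply/eqP.
rewrite -(eqn_modDl b) -[X in _ == X]modnDml -hab modnDml.
by case: e => [-> | [-> | <-]]; rewrite ?modnDr.
Qed.

Lemma triple_sorted (e : {set 'I_n}) : #|e| = 3 ->
  exists a b c, [/\ a < b, b < c, c < n & e = [set vx a; vx b; vx c]].
Proof.
move=> he; pose s := sort leq [seq val x | x <- enum e].
have mem_s (x : 'I_n) : (val x \in s) = (x \in e).
  by rewrite mem_sort mem_map ?mem_enum //; exact: val_inj.
have lt_s : sorted ltn s.
  by rewrite ltn_sorted_uniq_leq sort_uniq (map_inj_uniq val_inj) enum_uniq
    (sort_sorted leq_total).
have : size s = 3 by rewrite size_sort size_map -cardE he.
have bnd k : k \in s -> k < n by rewrite mem_sort => /mapP [x _ ->]; exact: ltn_ord.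
clearbody s; case: s mem_s lt_s bnd => [|a [|b [|c [|]]]] // mem_s /= /and3P [ab bc _] bnd _.
exists a, b, c; split => //; first by apply: bnd; rewrite !inE eqxx !orbT.
apply/setP => x; rewrite -mem_s !inE !eq_vx !modn_small ?orbA //;
  by apply: bnd; rewrite !inE eqxx ?orbT.
Qed.

(* [cpos r x] is the position of x when the circle is read starting at r;
   a map preserves the cyclic order iff it increases positions for some r. *)
Definition cpos (r x : 'I_n) : nat := (x + n - r) %% n.

Lemma cpos_lt r x : cpos r x < n.
Proof. exact: ltn_pmod. Qed.

Lemma cpos_vx a b : cpos (vx a) (vx b) = (b %% n + n - a %% n) %% n.
Proof. by rewrite /cpos !val_vx. Qed.

Lemma cpos_shift r s x : cpos s x = (cpos r x + cpos s r) %% n.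
Proof.
rewrite /cpos modnDm.
have -> : x + n - r + (r + n - s) = (x + n - s) + n.
  by move: (ltn_ord x) (ltn_ord r) (ltn_ord s); lia.
by rewrite modnDr.
Qed.

Definition M2_at (G : {set {set 'I_n}}) (r p0 p1 p2 p3 p4 p5 : 'I_n) : Prop :=
  [/\ [&& cpos r p0 < cpos r p1, cpos r p1 < cpos r p2, cpos r p2 < cpos r p3,
          cpos r p3 < cpos r p4 & cpos r p4 < cpos r p5],
      [set p0; p1; p3] \in G & [set p2; p4; p5] \in G].

Lemma contains_M2P (G : {set {set 'I_n}}) :
  contains_copy G M2 <-> exists r p0 p1 p2 p3 p4 p5, M2_at G r p0 p1 p2 p3 p4 p5.
Proof.
have i6 k : k < 6 -> (inord k : 'I_6) = k :> nat by move=> hk; rewrite inordK.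
split.
- case/existsP => phi /and3P [_ /existsP [r /forallP hr] /forallP hG].
  exists r, (phi (inord 0)), (phi (inord 1)), (phi (inord 2)), (phi (inord 3)),
    (phi (inord 4)), (phi (inord 5)).
  have mono a b : a < b -> b < 6 -> cpos r (phi (inord a)) < cpos r (phi (inord b)).
    move=> hab hb; move: (hr (inord a)) => /forallP /(_ (inord b)) /implyP; apply.
    by rewrite !i6 //; lia.
  split; first by rewrite !mono.
  + by have := hG [set inord 0; inord 1; inord 3]; rewrite imset_set3 !inE eqxx; apply.
  + by have := hG [set inord 2; inord 4; inord 5]; rewrite imset_set3 !inE eqxx orbT; apply.
- case=> r [p0 [p1 [p2 [p3 [p4 [p5 [/and5P [h01 h12 h23 h34 h45] hA hB]]]]]]].
  pose phi := [ffun i : 'I_6 => nth p0 [:: p0; p1; p2; p3; p4; p5] i].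
  have mono (i j : 'I_6) : i < j -> cpos r (phi i) < cpos r (phi j).
    case: i j => [[|[|[|[|[|[|i]]]]]] ?] [[|[|[|[|[|[|j]]]]]] ?] //= hij;
      rewrite !ffunE /=; lia.
  have phiE k : k < 6 -> phi (inord k) = nth p0 [:: p0; p1; p2; p3; p4; p5] k.
    by move=> hk; rewrite ffunE i6.
  apply/existsP; exists phi; apply/and3P; split.
  + apply/injectiveP => i j hij; apply: val_inj.
    by case: (ltngtP i j) => [/mono | /mono |]; rewrite ?hij ?ltnn.
  + apply/existsP; exists r; apply/forallP => i; apply/forallP => j.
    by apply/implyP => /mono.
  + apply/forallP => e; apply/implyP; rewrite !inE => /orP [] /eqP ->.
    all: by rewrite imset_set3 !phiE.
Qed.

Definition in_arc (s : 'I_n) (len : nat) (x : 'I_n) : bool := cpos s x < len.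

Definition arc_separated (A B : {set 'I_n}) : Prop :=
  exists s len, {in A, forall x, in_arc s len x} /\ {in B, forall y, ~~ in_arc s len y}.

(* An arc containing two vertices x, z but not a vertex y between them goes
   around the other way, so it contains every vertex outside [x, z]. *)
Lemma arc_wrap_nat a b c d t len : a < b -> b < c -> c < n -> d < n ->
  (d < a) || (c < d) -> t < n ->
  (a + t) %% n < len -> (c + t) %% n < len -> len <= (b + t) %% n -> (d + t) %% n < len.
Proof. by move=> ? ? ? ? ? ?; expand_mods; lia. Qed.

Lemma arc_wrap r s len (x y z w : 'I_n) :
  cpos r x < cpos r y -> cpos r y < cpos r z ->
  (cpos r w < cpos r x) || (cpos r z < cpos r w) ->
  in_arc s len x -> in_arc s len z -> ~~ in_arc s len y -> in_arc s len w.
Proof.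
rewrite /in_arc (cpos_shift r s x) (cpos_shift r s y) (cpos_shift r s z).
rewrite (cpos_shift r s w) -leqNgt.
by move=> hxy hyz hw; apply: arc_wrap_nat (cpos_lt _ _) (cpos_lt _ _) hw (cpos_lt _ _).
Qed.

Lemma M2_interlaced G r p0 p1 p2 p3 p4 p5 : M2_at G r p0 p1 p2 p3 p4 p5 ->
  [/\ [disjoint [set p0; p1; p3] & [set p2; p4; p5]],
      ~ arc_separated [set p0; p1; p3] [set p2; p4; p5] &
      ~ arc_separated [set p2; p4; p5] [set p0; p1; p3]].
Proof.
case=> /and5P [h01 h12 h23 h34 h45] _ _; split.
- rewrite disjoint_set3; apply/and3P; split; apply/negP => /set3P [] e;
    move: h01 h12 h23 h34 h45; rewrite e; lia.
- case=> s [len [inA outB]].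
  have p4_in : in_arc s len p4.
    apply: (arc_wrap h12 h23); first by rewrite h34 orbT.
    + exact: inA (set3_2 _ _ _).
    + exact: inA (set3_3 _ _ _).
    + exact: outB (set3_1 _ _ _).
  by move: (outB _ (set3_2 _ _ _)); rewrite p4_in.
- case=> s [len [inB outA]].
  have p0_in : in_arc s len p0.
    apply: (arc_wrap h23 h34); first by rewrite (ltn_trans h01 h12).
    + exact: inB (set3_1 _ _ _).
    + exact: inB (set3_2 _ _ _).
    + exact: outA (set3_3 _ _ _).
  by move: (outA _ (set3_1 _ _ _)); rewrite p0_in.
Qed.

Lemma separated_M2_free (G : {set {set 'I_n}}) :
  (forall A B, A \in G -> B \in G -> [disjoint A & B] ->
     arc_separated A B \/ arc_separated B A) ->
  ~~ contains_copy G M2.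
Proof.
move=> hsep; apply/negP => /contains_M2P [r [p0 [p1 [p2 [p3 [p4 [p5 hc]]]]]]].
have [hd hAB hBA] := M2_interlaced hc; case: hc => _ hA hB.
by case: (hsep _ _ hA hB hd).
Qed.

(* ... and in an M2-saturated 3-cgh each missing triple e is interlaced with
   an edge f: adding e creates a copy of M2, which must use e and an old edge. *)
Lemma saturated_interlaced (H : {set {set 'I_n}}) (e : {set 'I_n}) :
  saturated M2 H -> #|e| = 3 -> e \notin H ->
  exists2 f, f \in H & [/\ [disjoint e & f], ~ arc_separated e f & ~ arc_separated f e].
Proof.
case/and3P => _ hfree /forallP /(_ e) hs he heH.
move: hs; rewrite he eqxx heH /= => /contains_M2P [r [p0 [p1 [p2 [p3 [p4 [p5 hc]]]]]]].
have [hd hAB hBA] := M2_interlaced hc; case: (hc) => hpos.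
rewrite !in_setU1; case: eqP => [<- _ | _ hA].
  case: eqP => [eB | _ hB]; last by exists [set p2; p4; p5].
  by move: (disjointFr hd (set3_1 p0 p1 p3)); rewrite eB set3_1.
case: eqP => [<- _ | _ hB]; first by exists [set p0; p1; p3]; rewrite 1?disjoint_sym.
by case/negP: hfree; apply/contains_M2P; exists r, p0, p1, p2, p3, p4, p5.
Qed.

Definition consec (i : nat) : {set 'I_n} := [set vx i; vx i.+1; vx i.+2].

Lemma consec_separated i (Y : {set 'I_n}) : 2 < n -> i < n ->
  [disjoint consec i & Y] -> arc_separated (consec i) Y.
Proof.
move=> hn hi hd; exists (vx i), 3; split.
- by move=> x /set3P [] ->; rewrite /in_arc cpos_vx; expand_mods; lia.
- move=> y hy; apply/negP => hin.
  have : y \in consec i.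
    move: hin; rewrite /in_arc -(vx_val y) cpos_vx !inE !vx_eq.
    by have y_lt := ltn_ord y; expand_mods; lia.
  by rewrite (disjointFl hd hy).
Qed.

End CyclicOrder.

(* Tactics for routine goals about explicit vertices: [set_perm] proves that
   two enumerations of a finite set agree; [shift_contra] refutes a
   disequality [vx p <> vx q] by shifting an equality [vx a = vx b] of the
   context (lemma [vx_shift]); [clear_diseqs] drops disequalities that are
   irrelevant to a residue computation and would only slow lia down. *)
Ltac set_perm := apply/setP => w; rewrite !inE; do ![case: (_ == _)].

Ltac shift_contra hm :=
  match goal with H : vx _ _ <> vx _ _ |- _ =>
    apply: H; first [ apply: (vx_shift hm); lia | apply: (vx_shift (esym hm)); lia
                    | apply: esym; apply: (vx_shift hm); lia
                    | apply: esym; apply: (vx_shift (esym hm)); lia ]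
  end.

Ltac clear_diseqs := repeat match goal with H : _ <> _ |- _ => clear H end.

Section UpperBound.
Variable m : nat.
Local Notation n := m.+1.
Local Notation vx := (@vx m).
Local Notation consec := (@consec m).
Hypothesis m_ge7 : 7 <= m.

Definition fan i : {set 'I_n} := [set vx 0; vx i; vx i.+1].
Definition gapped i : {set 'I_n} := [set vx i; vx i.+1; vx (i + 3)].
Definition E024 : {set 'I_n} := [set vx 0; vx 2; vx 4].

Definition Hc : {set {set 'I_n}} :=
  [set consec i | i : 'I_n] :|: [set fan i | i : 'I_n & (0 < i) && (i.+1 < n)]
  :|: [set gapped i | i : 'I_n & i.+2 != n] :|: [set E024].

Lemma card_Hc : #|Hc| <= 3 * n + 1.
Proof.
have card_image (f : 'I_n -> {set 'I_n}) (P : pred 'I_n) : #|[set f i | i in P]| <= n.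
  by apply: leq_trans (leq_imset_card _ _) _; apply: leq_trans (max_card _) _; rewrite card_ord.
rewrite /Hc mulSn mulSn mul1n !addnA.
apply: leq_trans (leq_card_setU _ _) _; rewrite cards1 leq_add2r.
do 2 apply: leq_trans (leq_card_setU _ _) (leq_add _ (card_image _ _)).
exact: card_image.
Qed.

Lemma consec_Hc i : i < n -> consec i \in Hc.
Proof.
move=> hi; rewrite !in_setU; apply/orP; left; apply/orP; left; apply/orP; left.
by apply/imsetP; exists (Ordinal hi).
Qed.

Lemma fan_Hc i : 0 < i -> i.+1 < n -> fan i \in Hc.
Proof.
move=> hi0 hi; rewrite !in_setU; apply/orP; left; apply/orP; left; apply/orP; right.
by apply/imsetP; exists (Ordinal (ltnW hi)); rewrite // inE /= hi0 hi.
Qed.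

Lemma gapped_Hc i : i < n -> i.+2 != n -> gapped i \in Hc.
Proof.
move=> hi hi2; rewrite !in_setU; apply/orP; left; apply/orP; right.
by apply/imsetP; exists (Ordinal hi); rewrite // inE /= hi2.
Qed.

Lemma E024_Hc : E024 \in Hc.
Proof. by rewrite !inE eqxx orbT. Qed.

Lemma HcP X : X \in Hc -> [\/ exists2 i, i < n & X = consec i,
   exists i, [/\ 0 < i, i.+1 < n & X = fan i],
   exists i, [/\ i < n, i.+2 != n & X = gapped i] | X = E024].
Proof.
rewrite !inE => /orP [/orP [/orP [] | ] | ].
- by case/imsetP => i _ ->; apply: Or41; exists i.
- by case/imsetP => i; rewrite inE => /andP [h1 h2] ->; apply: Or42; exists i.
- by case/imsetP => i; rewrite inE => h2 ->; apply: Or43; exists i.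
- by move/eqP ->; apply: Or44.
Qed.

Lemma Hc_3cgh : is_3cgh Hc.
Proof.
apply/forallP => X; apply/implyP => /HcP [[i hi ->] | [i [h0 h1 ->]] | [i [hi h2 ->]] | ->];
  by rewrite card_set3 // !vx_eq; expand_mods; lia.
Qed.

(* A gapped triple {x, x+1, x+3} is separated, by the arc [x, x+3], from
   every disjoint set avoiding the gap vertex x+2. *)
Lemma gapped_separated x (Y : {set 'I_n}) : x < n ->
  [disjoint gapped x & Y] -> vx (x + 2) \notin Y -> arc_separated (gapped x) Y.
Proof.
move=> hx hd hgap; exists (vx x), 4; split.
- by move=> z /set3P [] ->; rewrite /in_arc cpos_vx; expand_mods; lia.
- move=> y hy; apply/negP => hin.
  have : (y == vx (x + 2)) || (y \in gapped x).
    move: hin; rewrite /in_arc -(vx_val y) cpos_vx !inE !vx_eq.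
    by have y_lt := ltn_ord y; expand_mods; lia.
  case/orP => [/eqP e | hy2]; first by rewrite -e hy in hgap.
  by rewrite (disjointFl hd hy) in hy2.
Qed.

Lemma Hc_gap x (Y : {set 'I_n}) : x < n -> x.+2 != n -> Y \in Hc ->
  [disjoint gapped x & Y] -> vx (x + 2) \notin Y.
Proof.
move=> hx hx2 hY hd; apply/negP => hmid; move: hd; rewrite /gapped disjoint_set3.
case: (HcP hY) hmid => [[i hi ->] | [i [h0 h1 ->]] | [i [hi h2 ->]] | ->] /set3P hm
  /and3P [/notin_set3 [a1 a2 a3] /notin_set3 [b1 b2 b3] /notin_set3 [c1 c2 c3]];
  case: hm => hm; first [ shift_contra hm
                        | move/vx_modn: hm; move: hx2; clear_diseqs; expand_mods; lia ].
Qed.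

(* Disjoint edges of Hc are separated: consecutive and gapped triples by the
   arcs they span, while fans and {0,2,4} pairwise meet at 0. *)
Lemma Hc_separated A B : A \in Hc -> B \in Hc -> [disjoint A & B] ->
  arc_separated A B \/ arc_separated B A.
Proof.
have meet0 (X Y : {set 'I_n}) : vx 0 \in X -> vx 0 \in Y -> [disjoint X & Y] -> False.
  by move=> hX hY /disjointFr/(_ hX); rewrite hY.
have sepC j (Y : {set 'I_n}) : j < n -> [disjoint consec j & Y] -> arc_separated (consec j) Y.
  by apply: consec_separated; lia.
have sepG j (Y : {set 'I_n}) : j < n -> j.+2 != n -> Y \in Hc -> [disjoint gapped j & Y] ->
    arc_separated (gapped j) Y.
  by move=> hj hj2 hY hd; apply: gapped_separated (Hc_gap hj hj2 hY hd).
move=> hA hB hd; have hd' := hd; rewrite disjoint_sym in hd'.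
case: (HcP hA) => [[i hi eA] | [i [_ _ eA]] | [i [hi hi2 eA]] | eA]; rewrite eA in hd hd' *.
- by left; apply: sepC.
- case: (HcP hB) => [[j hj eB] | [j [_ _ eB]] | [j [hj hj2 eB]] | eB]; rewrite eB in hd hd' *.
  + by right; apply: sepC.
  + by case: (meet0 _ _ (set3_1 _ _ _) (set3_1 _ _ _) hd).
  + by right; apply: sepG => //; rewrite -eA.
  + by case: (meet0 _ _ (set3_1 _ _ _) (set3_1 _ _ _) hd).
- by left; apply: sepG.
- case: (HcP hB) => [[j hj eB] | [j [_ _ eB]] | [j [hj hj2 eB]] | eB]; rewrite eB in hd hd' *.
  + by right; apply: sepC.
  + by case: (meet0 _ _ (set3_1 _ _ _) (set3_1 _ _ _) hd).
  + by right; apply: sepG => //; rewrite -eA.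
  + by case: (meet0 _ _ (set3_1 _ _ _) (set3_1 _ _ _) hd).
Qed.

Lemma Hc_M2_free : ~~ contains_copy Hc M2.
Proof. exact: separated_M2_free Hc_separated. Qed.

Lemma M2_of_indices (G : {set {set 'I_n}}) r a0 a1 a2 a3 a4 a5 :
  cpos (vx r) (vx a0) < cpos (vx r) (vx a1) -> cpos (vx r) (vx a1) < cpos (vx r) (vx a2) ->
  cpos (vx r) (vx a2) < cpos (vx r) (vx a3) -> cpos (vx r) (vx a3) < cpos (vx r) (vx a4) ->
  cpos (vx r) (vx a4) < cpos (vx r) (vx a5) ->
  [set vx a0; vx a1; vx a3] \in G -> [set vx a2; vx a4; vx a5] \in G -> contains_copy G M2.
Proof.
move=> h01 h12 h23 h34 h45 hA hB; apply/contains_M2P.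
by exists (vx r), (vx a0), (vx a1), (vx a2), (vx a3), (vx a4), (vx a5); rewrite /M2_at h01 h12 h23 h34 h45.
Qed.

Ltac by_positions := rewrite !cpos_vx; expand_mods; lia.

(* Adding a missing triple e = {a, b, c}, a < b < c, to Hc creates a copy of
   M2: in each case below e forms a copy with a fan or a gapped triple. *)
Lemma Hc_extend a b c : a < b -> b < c -> c < n -> [set vx a; vx b; vx c] \notin Hc ->
  contains_copy ([set vx a; vx b; vx c] |: Hc) M2.
Proof.
move=> hab hbc hc hnot.
have old X : X \in Hc -> X \in [set vx a; vx b; vx c] |: Hc.
  by move=> hX; rewrite setU1r.
have new X : X = [set vx a; vx b; vx c] -> X \in [set vx a; vx b; vx c] |: Hc.
  by move=> ->; rewrite setU11.
case: (posnP a) => [a0 | a_pos].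
- subst a.
  have [/andP [h1 h2] | not_i] := boolP ((2 < b) && (b.+1 < c)).
    (* cyclic order b-2, b-1, b, b+1, c, 0; old edge {b-2, b-1, b+1} *)
    apply: (@M2_of_indices _ (b - 2) (b - 2) (b - 2).+1 b ((b - 2) + 3) c 0);
      try by_positions.
    + by apply: old; apply: gapped_Hc; lia.
    + by apply: new; set_perm.
  have [/andP [h1 h2] | not_ii] := boolP ((b.+2 < c) && (c.+2 <= n)).
    (* cyclic order c-2, c-1, c, c+1, 0, b; old edge {c-2, c-1, c+1} *)
    apply: (@M2_of_indices _ (c - 2) (c - 2) (c - 2).+1 c ((c - 2) + 3) 0 b);
      try by_positions.
    + by apply: old; apply: gapped_Hc; lia.
    + by apply: new; set_perm.
  (* otherwise e is a fan, a gapped triple, {0,2,4} or wraps around 0 *)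
  case/negP: hnot.
  have : c = b.+1 \/ (b = 1 /\ c = 3) \/ (b = 2 /\ c = 4) \/ (b = 1 /\ c = m) \/ (b = 2 /\ c = m).
    by move: not_i not_ii; lia.
  case=> [-> | [[-> ->] | [[-> ->] | [[-> ->] | [-> ->]]]]].
  + by apply: fan_Hc; lia.
  + by apply: (@gapped_Hc 0); lia.
  + exact: E024_Hc.
  + have -> : [set vx 0; vx 1; vx m] = consec m.
      have e1 : vx m.+1 = vx 0 by apply: vxE; expand_mods; lia.
      have e2 : vx m.+2 = vx 1 by apply: vxE; expand_mods; lia.
      by rewrite /consec e1 e2; set_perm.
    exact: consec_Hc.
  + have -> : [set vx 0; vx 2; vx m] = gapped m.
      have e1 : vx m.+1 = vx 0 by apply: vxE; expand_mods; lia.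
      have e2 : vx (m + 3) = vx 2 by apply: vxE; expand_mods; lia.
      by rewrite /gapped e1 e2; set_perm.
    by apply: gapped_Hc; rewrite // neq_ltn ltnSn orbT.
- have [h | not_iii] := boolP (a.+2 < b).
    (* cyclic order b, c, 0, a, a+1, a+2; old edge {0, a+1, a+2} *)
    apply: (@M2_of_indices _ b b c 0 a a.+1 a.+2); try by_positions.
    + by apply: new; set_perm.
    + by apply: old; apply: fan_Hc; lia.
  have [h | not_iv] := boolP (b.+2 < c).
    (* cyclic order b+1, b+2, c, 0, a, b; old edge {0, b+1, b+2} *)
    apply: (@M2_of_indices _ b.+1 b.+1 b.+2 c 0 a b); try by_positions.
    + apply: old; rewrite (_ : [set vx b.+1; vx b.+2; vx 0] = fan b.+1).
        by apply: fan_Hc; lia.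
      by rewrite /fan; set_perm.
    + by apply: new; set_perm.
  have : (b = a.+1 /\ c = a.+2) \/ (b = a.+1 /\ c = a + 3) \/ (b = a.+2 /\ 2 <= a) \/
         (b = 3 /\ a = 1) by move: not_iii not_iv; lia.
  case=> [[? ?] | [[? ?] | [[? ha] | [? ?]]]]; subst.
  + by case/negP: hnot; apply: consec_Hc; lia.
  + by case/negP: hnot; apply: gapped_Hc; lia.
  + (* cyclic order a-2, a-1, a, a+1, b, c; old edge {a-2, a-1, a+1} *)
    apply: (@M2_of_indices _ 0 (a - 2) (a - 2).+1 a ((a - 2) + 3) a.+2 c); try by_positions.
    + by apply: old; apply: gapped_Hc; lia.
    + exact: new.
  + (* cyclic order m, 0, 1, 2, 3, c; old edge {m, 0, 2} *)
    apply: (@M2_of_indices _ m m m.+1 1 (m + 3) 3 c); try by_positions.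
    + by apply: old; apply: gapped_Hc; rewrite // neq_ltn ltnSn orbT.
    + exact: new.
Qed.

Lemma Hc_saturated : saturated M2 Hc.
Proof.
apply/and3P; split; [exact: Hc_3cgh | exact: Hc_M2_free |].
apply/forallP => e; apply/implyP => /eqP he; apply/implyP.
by have [a [b [c [hab hbc hc ->]]]] := triple_sorted he; apply: Hc_extend.
Qed.

End UpperBound.

Section LowerBound.
Variable m : nat.
Local Notation n := m.+1.
Local Notation vx := (@vx m).
Local Notation consec := (@consec m).
Hypothesis m_ge7 : 7 <= m.
Variable H : {set {set 'I_n}}.
Hypothesis H_sat : saturated M2 H.

Lemma H_card3 f : f \in H -> #|f| = 3.
Proof. by case/and3P: H_sat => /forallP /(_ f) /implyP h _ _ /h /eqP. Qed.

(* Every consecutive triple is an edge: it is separated from every triple. *)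
Lemma consec_in_H j : j < n -> consec j \in H.
Proof.
move=> hj; apply/negPn/negP => hT.
have card_consec : #|consec j| = 3 by rewrite card_set3 // !vx_eq; expand_mods; lia.
have [f _ [hd not_sep _]] := saturated_interlaced H_sat card_consec hT.
by apply: not_sep; apply: consec_separated => //; lia.
Qed.

Definition consecs : {set {set 'I_n}} := [set consec i | i : 'I_n].

Lemma card_consecs : #|consecs| = n.
Proof.
rewrite card_imset ?card_ord // => i j /= e.
have hi : vx i \in consec j by rewrite -e set3_1.
have hj : vx j \in consec i by rewrite e set3_1.
apply: ord_inj; have i_lt := ltn_ord i; have j_lt := ltn_ord j.
by case/set3P: hi => /vx_modn; case/set3P: hj => /vx_modn; expand_mods; lia.
Qed.

Lemma consecs_sub : consecs \subset H.
Proof. by apply/subsetP => X /imsetP [i _ ->]; apply: consec_in_H. Qed.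

Definition skipping (v : 'I_n) (b : bool) : {set 'I_n} :=
  if b then [set vx (v + n - 2); vx (v + n - 1); vx v.+1]
  else [set vx (v + n - 1); vx v.+1; vx v.+2].

Lemma card_skipping v b : #|skipping v b| = 3.
Proof. by have v_lt := ltn_ord v; case: b; rewrite card_set3 // !vx_eq; expand_mods; lia. Qed.

Lemma skipping_not_consec v b : skipping v b \notin consecs.
Proof.
apply/negP => /imsetP [j _ e]; have v_lt := ltn_ord v; have j_lt := ltn_ord j.
case: b e => /= e.
- have h1 : vx (v + n - 2) \in consec j by rewrite -e set3_1.
  have h2 : vx v.+1 \in consec j by rewrite -e set3_3.
  by case/set3P: h1 => /vx_modn; case/set3P: h2 => /vx_modn; expand_mods; lia.
- have h1 : vx (v + n - 1) \in consec j by rewrite -e set3_1.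
  have h2 : vx v.+2 \in consec j by rewrite -e set3_3.
  by case/set3P: h1 => /vx_modn; case/set3P: h2 => /vx_modn; expand_mods; lia.
Qed.

(* A set disjoint from [skipping v b] and avoiding v lies in the arc formed
   by the other n - 4 vertices; so an interlaced edge must contain v. *)
Lemma interlaced_through v b (f : {set 'I_n}) :
  [disjoint skipping v b & f] -> ~ arc_separated f (skipping v b) -> v \in f.
Proof.
move=> hd not_sep; apply/negPn/negP => hv; apply: not_sep.
have v_lt := ltn_ord v.
exists (vx (v + (if b then 2 else 3))), (n - 4); split.
- move=> x hx; have x_lt := ltn_ord x.
  have xv : (x : nat) <> v by move=> e; move: hv; rewrite (_ : v = x) ?hx //; apply: val_inj.
  have ne_val k : x <> vx k -> (x : nat) <> k %% n.
    by move=> h e; apply: h; apply: ord_inj; rewrite val_vx.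
  move/negbT: (disjointFl hd hx); rewrite /in_arc /cpos val_vx.
  case: b {hd} => /= /notin_set3 [/ne_val e1 /ne_val e2 /ne_val e3];
    by move: e1 e2 e3; expand_mods; lia.
- by move=> y; case: b {hd} => /set3P [] ->; rewrite /in_arc cpos_vx; expand_mods; lia.
Qed.

Lemma skipping_witness v b : skipping v b \notin H ->
  exists f, [&& f \in H :\: consecs, v \in f & [disjoint skipping v b & f]].
Proof.
move=> hD.
have [f hf [hd _ not_sep]] := saturated_interlaced H_sat (card_skipping v b) hD.
have hv := interlaced_through hd not_sep.
exists f; rewrite hv hd inE hf !andbT; apply/negP => /imsetP [j _ ej].
rewrite ej in hv hd; move: hv; rewrite -(vx_val v) => /set3P hm.
move: hd; rewrite /skipping; case: b {hD not_sep hf} => /=; rewrite disjoint_set3 =>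
  /and3P [/notin_set3 [a1 a2 a3] /notin_set3 [b1 b2 b3] /notin_set3 [c1 c2 c3]];
  by case: hm => hm; shift_contra hm.
Qed.

Definition witness v b : {set 'I_n} :=
  odflt set0 [pick f | [&& f \in H :\: consecs, v \in f & [disjoint skipping v b & f]]].

Lemma witnessP v b : skipping v b \notin H ->
  [&& witness v b \in H :\: consecs, v \in witness v b & [disjoint skipping v b & witness v b]].
Proof.
move=> hD; rewrite /witness; case: pickP => [f hf | none] //=.
by case: (skipping_witness hD) => f hf; rewrite none in hf.
Qed.

Definition charge (p : 'I_n * bool) : {set 'I_n} * 'I_n :=
  if skipping p.1 p.2 \in H then (skipping p.1 p.2, vx (p.1).+1) else (witness p.1 p.2, p.1).

Lemma chargeP p : ((charge p).1 \in H :\: consecs) && ((charge p).2 \in (charge p).1).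
Proof.
case: p => v b; rewrite /charge /=; case: ifP => hD /=.
  by rewrite inE hD andbT skipping_not_consec; case: b {hD}; rewrite /skipping ?set3_3 ?set3_2.
by case/and3P: (witnessP (negbT hD)) => -> ->.
Qed.

Lemma skipping_meet (v : 'I_n) b : ~~ [disjoint skipping (vx v.+1) b & skipping v b].
Proof.
have v_lt := ltn_ord v; case: b => /=.
- have e : vx (vx v.+1 + n - 2) = vx (v + n - 1) by apply: vxE; rewrite val_vx; expand_mods; lia.
  by rewrite e; apply/negP => /disjointFr /(_ (set3_1 _ _ _)); rewrite set3_2.
- have e : vx (vx v.+1).+1 = vx v.+2 by apply: vxE; rewrite val_vx; expand_mods; lia.
  by rewrite e; apply/negP => /disjointFr /(_ (set3_2 _ _ _)); rewrite set3_3.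
Qed.

Lemma charge_inj : injective (fun p => (charge p, p.2)).
Proof.
move=> [v b] [w c] /=; rewrite /charge /=.
case: ifP => hv; case: ifP => hw; case=> e1 e2 e3; subst c.
- congr pair; apply: ord_inj; move/vx_modn: e2; have v_lt := ltn_ord v; have w_lt := ltn_ord w.
  by expand_mods; lia.
- case/and3P: (witnessP (negbT hw)) => _ _; rewrite -e1 -e2 => hd.
  by case/negP: (skipping_meet v b).
- case/and3P: (witnessP (negbT hv)) => _ _; rewrite e1 e2 => hd.
  by case/negP: (skipping_meet w b).
- by rewrite e2.
Qed.

Definition slot (f : {set 'I_n}) (x : 'I_n) : 'I_3 := inord (index x (enum f)).

Lemma slot_inj (f : {set 'I_n}) (x y : 'I_n) : #|f| = 3 -> x \in f -> y \in f ->
  slot f x = slot f y -> x = y.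
Proof.
move=> hf hx hy; have rank z : z \in f -> index z (enum f) < 3.
  by move=> hz; rewrite -hf cardE index_mem mem_enum.
move/(congr1 val); rewrite /slot /= !inordK ?rank // => e.
by rewrite -(nth_index x (_ : x \in enum f)) ?mem_enum // e nth_index ?mem_enum.
Qed.

(* The 2n charges are distinct incidences (edge, slot, side) of the
   non-consecutive edges: 2n <= 6 (#|H| - n). *)
Lemma saturated_lower : 4 * n <= 3 * #|H|.
Proof.
pose F (p : 'I_n * bool) := ((charge p).1, slot (charge p).1 (charge p).2, p.2).
have F_inj : injective F.
  move=> p q [e1 e2 e3]; apply: charge_inj => /=.
  case/andP: (chargeP p) => /setDP [hp _] hp2; case/andP: (chargeP q) => _ hq2.
  rewrite e3; congr pair; apply: injective_projections => //.
  apply: (slot_inj (H_card3 hp) hp2); first by rewrite e1.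
  by move: e2; rewrite -e1.
have sub : F @: setT \subset setX (setX (H :\: consecs) [set: 'I_3]) [set: bool].
  apply/subsetP => z /imsetP [p _ ->]; rewrite !inE /= andbT.
  by case/andP: (chargeP p); rewrite !inE andbT => ->.
have := subset_leq_card sub; rewrite card_imset // !cardsX !cardsT card_bool card_ord.
rewrite card_prod card_ord card_bool.
have := cardsID consecs H; rewrite (setIidPr consecs_sub) card_consecs.
set k := #|H :\: consecs|; lia.
Qed.

End LowerBound.

Lemma sat_M2_bounds m : 7 <= m ->
  4 * m.+1 <= 3 * sat M2 m.+1 /\ sat M2 m.+1 <= 3 * m.+1 + 1.
Proof.
move=> hm; split.
- apply: (big_ind (fun y => 4 * m.+1 <= 3 * y)).
  + (* the default value C(n, 3) of an empty minimum also satisfies the bound *)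
    have := bin_ffact m.+1 3; rewrite !ffactnS ffactn0 /= => hC.
    by rewrite (_ : 3`! = 6) // in hC; nia.
  + by move=> a b ha hb; rewrite /minn; case: ifP.
  + by move=> H; apply: saturated_lower.
- apply: (leq_trans _ (card_Hc m)); rewrite /sat -minEnat.
  exact: (@Order.TotalTheory.bigmin_le_cond _ nat _ _ _ _ _ (Hc_saturated hm)).
Qed.

Import Order.TTheory GRing.Theory Num.Theory.
Local Open Scope ring_scope.

Theorem propositionA5 :
  forall eps : rat, 0 < eps -> exists N : nat, forall n : nat, (N <= n)%N ->
    (11%:R / 9%:R - eps) * n%:R <= (sat M2 n)%:R /\
    (sat M2 n)%:R <= (3%:R + eps) * n%:R.
Proof.
move=> eps eps_gt0.
have inv_ge0 : 0 <= eps^-1 by rewrite invr_ge0 ltW.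
exists (maxn 8 (Num.bound eps^-1)) => n hn.
have n_ge8 : (8 <= n)%N by apply: leq_trans hn; rewrite leq_maxl.
have n_big : eps^-1 < n%:R.
  apply: lt_le_trans (archi_boundP inv_ge0) _.
  by rewrite ler_nat (leq_trans _ hn) // leq_maxr.
case: n hn n_ge8 n_big => [// | m] _ m_ge7 n_big.
have [lo hi] := sat_M2_bounds m_ge7.
have {lo} lo : (4 * m.+1)%:R <= (3 * sat M2 m.+1)%:R :> rat by rewrite ler_nat.
have {hi} hi : (sat M2 m.+1)%:R <= (3 * m.+1 + 1)%:R :> rat by rewrite ler_nat.
rewrite !natrM natrD in lo hi.
have eps_inv : eps * eps^-1 = 1 by rewrite mulfV // gt_eqF.
(* 4n/3 >= 11n/9 - eps n, and 1 <= eps n since n > 1/eps *)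
split; nra.
Qed.
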